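(* Let $\mathcal{S}$ be a reduced linear subspace of $\mathrm{Mat}_{m,n}(\mathbb{K})$ with the column property and $m\geq 2$. Set $r:=\mathrm{urk}(\mathcal{S})$ and assume $\#\mathbb{K}>r$ and that there is a vector $x\in\mathbb{K}^n$ with $\dim\{Mx\mid M\in\mathcal{S}\}=1$. Then there are an integer $q\in\{r,\dots,n-1\}$ and a space $\mathcal{S}'\sim\mathcal{S}$ such that every $M\in\mathcal{S}'$ has the form $M=\begin{bmatrix} ?_{1\times q} & ?_{1\times(n-q)}\\ H(M) & 0_{(m-1)\times(n-q)}\end{bmatrix}$, where $H(\mathcal{S}')$ is a reduced subspace of $\mathrm{Mat}_{m-1,q}(\mathbb{K})$ with the column property and upper-rank $r-1$. In particular, $\mathcal{S}$ is not primitive.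
   Context: $\mathrm{urk}$ (upper-rank) is the maximal rank of a matrix in the space. Matrix spaces are equivalent ($\sim$) if $\mathcal{M}=P\mathcal{M}'Q$ with $P,Q$ invertible. A matrix space is reduced if no nonzero vector is annihilated by all its matrices and the sum of its column spaces is the whole target space. A subspace is defective if none of its matrices has rank equal to its number of columns. $\mathcal{S}$ is $(r,s)$-decomposed if every $M$ is of the form $\begin{bmatrix} ?_{r\times s}& C(M)\\ B(M)&0\end{bmatrix}$ with lower space $B(\mathcal{S})$; the column property means every $(r,s)$-decomposed space equivalent to $\mathcal{S}$ ($0\le r\le m$, $1\le s\le n$) has defective lower space. For an operator space $\mathcal{T}\subseteq\mathcal{L}(U,V)$ with defectiveness index $c$ (greatest $c$ with $\dim\ker f\ge c$ for all $f$), $\mathcal{T}$ is primitive if it is reduced, there is no hyperplane $U'$ of $U$ with $\{f_{|U'}\}$ $c$-defective, and there is no surjection $\pi:V\to V'$ with $\dim V'=\dim V-1$ such that $\{\pi\circ f\}$ is $(c+1)$-defective; a matrix space is primitive if the corresponding operator space is. *)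

From HB Require Import structures.
From mathcomp Require Import all_boot all_order all_algebra.
Unset Printing Implicit Defensive.
Import Order.TTheory GRing.Theory Num.Theory.
Local Open Scope ring_scope.


(* A (Prop-valued) set of m x n matrices; a "matrix space" is given as such a
   predicate (in the theorem, the membership predicate of a {vspace}). *)
Notation mxset K m n := ('M[K]_(m, n) -> Prop).

(* entry (i,j) of M, given as naturals (0 outside the range) *)
Definition mxe {K : fieldType} {m n : nat} (M : 'M[K]_(m, n)) (i j : nat) : K :=
  match (insub i : option 'I_m), (insub j : option 'I_n) with
  | Some i', Some j' => M i' j'
  | _, _ => 0
  end.

Definition lowblock {K : fieldType} {m n : nat} (r s : nat) (M : 'M[K]_(m, n)) : 'M[K]_(m - r, s) :=
  \matrix_(i < m - r, j < s) mxe M (r + i) j.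

Definition urk {K : fieldType} {m n : nat} (S : mxset K m n) (r : nat) : Prop :=
  (exists M, S M /\ \rank M = r) /\ (forall M, S M -> (\rank M <= r)%N).

Definition mxequiv {K : fieldType} {m n : nat} (S T : mxset K m n) : Prop :=
  exists (P : 'M[K]_m) (Q : 'M[K]_n), P \in unitmx /\ Q \in unitmx /\
    forall M, S M <-> exists M', T M' /\ M = P *m M' *m Q.

Definition reduced {K : fieldType} {m n : nat} (S : mxset K m n) : Prop :=
  (forall x : 'cV[K]_n, (forall M, S M -> M *m x = 0) -> x = 0) /\
  (forall v : 'cV[K]_m, exists (k : nat) (Ms : 'I_k -> 'M[K]_(m, n))
      (xs : 'I_k -> 'cV[K]_n),
      (forall i, S (Ms i)) /\ v = \sum_(i < k) Ms i *m xs i).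

Definition defective {K : fieldType} {m n : nat} (S : mxset K m n) : Prop :=
  forall M, S M -> (\rank M < n)%N.

Definition decomposed {K : fieldType} {m n : nat} (r s : nat) (S : mxset K m n) : Prop :=
  forall M, S M -> forall (i : 'I_m) (j : 'I_n), (r <= i)%N -> (s <= j)%N -> M i j = 0.

Definition lowspace {K : fieldType} {m n : nat} (r s : nat) (S : mxset K m n) : mxset K (m - r) s :=
  fun N => exists M, S M /\ N = lowblock r s M.

Definition column_property {K : fieldType} {m n : nat} (S : mxset K m n) : Prop :=
  forall (r s : nat), (r <= m)%N -> (1 <= s <= n)%N ->
  forall S' : mxset K m n, mxequiv S' S -> decomposed r s S' ->
  defective (lowspace r s S').

Definition dker {K : fieldType} {m n : nat} (U : {vspace 'cV[K]_n}) (M : 'M[K]_(m, n)) : nat :=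
  \dim (U :&: lker (linfun (mulmx M)))%VS.

Definition cdefective_on {K : fieldType} {m n : nat} (c : nat) (U : {vspace 'cV[K]_n}) (S : mxset K m n) :=
  forall M, S M -> (c <= dker U M)%N.

Definition defidx {K : fieldType} {m n : nat} (S : mxset K m n) (c : nat) : Prop :=
  cdefective_on c fullv S /\
  forall c', cdefective_on c' fullv S -> (c' <= c)%N.

Definition primitive {K : fieldType} {m n : nat} (S : mxset K m n) : Prop :=
  reduced S /\
  forall c, defidx S c ->
    (~ exists U : {vspace 'cV[K]_n},
         (0 < n)%N /\ \dim U = n.-1 /\ cdefective_on c U S) /\
    (~ exists pi : 'M[K]_(m.-1, m),
         limg (linfun (mulmx pi : 'cV[K]_m -> 'cV[K]_(m.-1))) = fullv /\
         forall M, S M -> (c.+1 <= dker fullv (pi *m M))%N).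

From HB Require Import structures.
From mathcomp Require Import all_boot all_order all_algebra.
From mathcomp Require Import zify.
Unset Printing Implicit Defensive.
Import Order.TTheory GRing.Theory Num.Theory.
Local Open Scope ring_scope.

(* Let x be such that S x is a line K y, and write
   lowpart N for N with its first row deleted.
   1. An invertible P moves y onto the first axis, so lowpart (P M) kills x
      for every M in S (line_image_normal).
   2. Key rank lemma (lowpart_rank_drop): as #K > r = urk S and some M1 x is
      nonzero, every lowpart (P M) has rank < r; otherwise a member of the
      pencil a M + M1 would keep full rank r after deleting its first row
      (pencil_rank), and then both it and M would kill x, hence so would M1.
   3. Column compression: with B the span of the rows of the lowpart (P M)
      and q = rank B, an invertible Q maps B onto the first q coordinates, so
      S' = P S Q is (1,q)-decomposed and the first q columns of its lower
      parts have no common kernel (column_compression).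
   4. The lower space H(S') then inherits reducedness and the column property
      from S, has upper rank r - 1 by step 2, and the column property for
      (r,s) = (1,q) gives r <= q (lowspace_props); q < n because Q^-1 x is a
      nonzero common kernel vector of the lower parts.
   5. Finally pi = lowpart P is a surjection K^m -> K^(m-1) with
      rank (pi M) < r, so pi.S is (n - r + 1)-defective while the
      defectiveness index of S is n - r: S is not primitive. *)

Section NatIndexedEntries.
Context {K : fieldType}.

Lemma mxe_ord m n (M : 'M[K]_(m, n)) (i : 'I_m) (j : 'I_n) : mxe M i j = M i j.
Proof. by rewrite /mxe (valK i) (valK j). Qed.

Lemma mxe_outl m n (M : 'M[K]_(m, n)) (i j : nat) : (m <= i)%N -> mxe M i j = 0.
Proof. by move=> h; rewrite /mxe insubF // ltnNge h. Qed.

Lemma mxe_outr m n (M : 'M[K]_(m, n)) (i j : nat) : (n <= j)%N -> mxe M i j = 0.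
Proof. by move=> h; rewrite /mxe; case: insub => // ?; rewrite insubF // ltnNge h. Qed.

Lemma mxe_lowblock m n r s (M : 'M[K]_(m, n)) (i j : nat) :
  mxe (lowblock r s M) i j =
    if ((i < m - r) && (j < s))%N then mxe M (r + i) j else 0.
Proof.
case: (ltnP i (m - r)) => hi /=; last by rewrite mxe_outl.
case: (ltnP j s) => hj; last by rewrite mxe_outr.
by rewrite -[i]/(val (Ordinal hi)) -[j]/(val (Ordinal hj)) mxe_ord mxE.
Qed.

Lemma mxe_rank a c b (A : 'M[K]_(a, b)) (B : 'M[K]_(c, b)) :
  a = c -> (forall i j : nat, mxe A i j = mxe B i j) -> \rank A = \rank B.
Proof.
move=> e; case: c / e B => B h; congr (\rank _).
by apply/matrixP => i j; rewrite -!mxe_ord h.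
Qed.

Lemma rank_lowblock_lowblock {m n} q r s (X : 'M[K]_(m, n)) : (s <= q)%N ->
  \rank (lowblock r s (lowblock 1 q X)) = \rank (lowblock (1 + r) s X).
Proof.
move=> sq; apply: mxe_rank; first lia.
move=> a b; rewrite !mxe_lowblock subnDA -addnA.
case: ifP => // /andP [ha hb]; rewrite ifT //; apply/andP; split; lia.
Qed.

End NatIndexedEntries.

Section RankAndKernel.
Context {K : fieldType}.

Lemma dim_limg_mulmx {a b} (A : 'M[K]_(a, b)) :
  \dim (limg (linfun (mulmx A : 'cV_b -> 'cV_a))) = \rank A.
Proof.
set X := col_base A; set Y := row_base A.
have XY : X *m Y = A by exact: mulmx_base.
have [Xl Xl_id] : exists Xl, Xl *m X = 1%:M by apply/row_fullP; exact: col_base_full.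
have [Yr Yr_id] : exists Yr, Yr *m Y^T = 1%:M.
  by apply/row_fullP; rewrite /row_full mxrank_tr; exact: row_base_free.
have -> : limg (linfun (mulmx A : 'cV_b -> 'cV_a)) =
          limg (linfun (mulmx X : 'cV_(\rank A) -> 'cV_a)).
  apply/eqP; rewrite eqEsubv; apply/andP; split;
    apply/subvP => v /memv_imgP [u _ ->]; rewrite lfunE /=.
    have -> : A *m u = X *m (Y *m u) by rewrite mulmxA XY.
    by have := memv_img (linfun (mulmx X : 'cV_(\rank A) -> 'cV_a)) (memvf (Y *m u));
      rewrite lfunE.
  have -> : X *m u = A *m (Yr^T *m u).
    transitivity (X *m Y *m (Yr^T *m u)); last by rewrite XY.
    by rewrite -mulmxA (mulmxA Y) -[Y]trmxK -trmx_mul Yr_id trmx1 mul1mx.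
  by have := memv_img (linfun (mulmx A : 'cV_b -> 'cV_a)) (memvf (Yr^T *m u));
    rewrite lfunE.
rewrite limg_dim_eq; first by rewrite dimvf dim_matrix mulr1.
apply/eqP; rewrite -subv0; apply/subvP => u; rewrite memv_cap memv_ker lfunE /= memv0.
by case/andP => _ /eqP Xu0; rewrite -[u]mul1mx -Xl_id -mulmxA Xu0 mulmx0.
Qed.

Lemma dker_full {a b} (A : 'M[K]_(a, b)) : dker fullv A = (b - \rank A)%N.
Proof.
have := limg_ker_dim (linfun (mulmx A : 'cV_b -> 'cV_a)) fullv.
rewrite dimvf dim_matrix mulr1 /dker -(dim_limg_mulmx A).
by move: (\dim (_ :&: _)) (\dim (limg _)) => d1 d2 <-; rewrite addnK.
Qed.

Lemma rank_PMQ {m n} (P : 'M[K]_m) (Q : 'M[K]_n) (M : 'M[K]_(m, n)) :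
  P \in unitmx -> Q \in unitmx -> \rank (P *m M *m Q) = \rank M.
Proof.
move=> Pu Qu; rewrite mxrankMfree ?row_free_unit //.
by rewrite -mxrank_tr trmx_mul mxrankMfree ?mxrank_tr // row_free_unit unitmx_tr.
Qed.

Lemma exists_regular_shift {r} (A : 'M[K]_r) :
  (exists f : 'I_r.+1 -> K, injective f) -> exists a, (a%:M - A) \in unitmx.
Proof.
move=> [f finj].
have [a _ a_nonroot] : exists2 a, a \in map f (enum 'I_r.+1) & ~~ root (char_poly A) a.
  apply/allPn/negP => all_roots.
  have := max_poly_roots (monic_neq0 (char_poly_monic A)) all_roots.
  by rewrite map_inj_uniq // enum_uniq size_map size_enum_ord size_char_poly ltnn => /(_ isT).
exists a; rewrite unitmxE unitfE; apply/negP => /det0P [v v0 hv].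
move: a_nonroot; rewrite -eigenvalue_root_char => /negP; apply; apply/eigenvalueP.
exists v => //; move/eqP: hv; rewrite mulmxBr subr_eq0 => /eqP <-.
by rewrite -scalemx1 -scalemxAr mulmx1.
Qed.

Lemma pencil_rank {p n r} (D0 D1 : 'M[K]_(p, n)) :
  (exists f : 'I_r.+1 -> K, injective f) -> \rank D0 = r ->
  exists a, (r <= \rank (a *: D0 + D1)%R)%N.
Proof.
move=> hf rD0.
have D0E := mulmx_ebase D0; rewrite rD0 in D0E.
have Cu : col_ebase D0 \in unitmx by exact: col_ebase_unit.
have Ru : row_ebase D0 \in unitmx by exact: row_ebase_unit.
move: (col_ebase D0) (row_ebase D0) Cu Ru D0E => C R' Cu Ru D0E.
have rp : (r <= p)%N by rewrite -rD0 rank_leq_row.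
have rn : (r <= n)%N by rewrite -rD0 rank_leq_col.
pose L : 'M[K]_(r, p) := pid_mx r *m invmx C.
pose R : 'M[K]_(n, r) := invmx R' *m pid_mx r.
have LD0R : L *m D0 *m R = 1%:M.
  rewrite /L /R -D0E !mulmxA (mulmxKV Cu) -!mulmxA (mulKVmx Ru).
  by rewrite !mulmxA !pid_mx_id // pid_mx_1.
have [a hu] := exists_regular_shift (- (L *m D1 *m R)) hf.
exists a; apply: leq_trans _ (mxrankM_maxr L _).
apply: leq_trans _ (mxrankM_maxl _ R).
suff -> : L *m (a *: D0 + D1) *m R = a%:M - - (L *m D1 *m R) by rewrite mxrank_unit.
by rewrite opprK mulmxDr mulmxDl -scalemxAr -scalemxAl LD0R scalemx1.
Qed.

End RankAndKernel.

Section FirstRowDeletion.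
Context {K : fieldType}.

(* [lowpart N] is N with its first row deleted; we work with m'.+2 rows so
   that m'.+2 - 1 reduces to m'.+1. *)
Definition lowpart {m' n} (N : 'M[K]_(m'.+2, n)) : 'M[K]_(m'.+1, n) :=
  dsubmx (N : 'M_(1 + m'.+1, n)).

(* Deleting the first row is left multiplication by a fixed matrix; this
   gives linearity and compatibility with products for free. *)
Lemma lowpart_mulE {m' n} (N : 'M[K]_(m'.+2, n)) :
  lowpart N = dsubmx (1%:M : 'M_(1 + m'.+1)) *m N.
Proof. by rewrite /lowpart mul_dsub_mx mul1mx. Qed.

Lemma lowpart_mul {m' n p} (N : 'M[K]_(m'.+2, n)) (B : 'M[K]_(n, p)) :
  lowpart (N *m B) = lowpart N *m B.
Proof. by rewrite !lowpart_mulE mulmxA. Qed.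

Lemma lowpart_entry {m' n} (N : 'M[K]_(m'.+2, n)) (i : 'I_m'.+1) (j : 'I_n) :
  lowpart N i j = N (rshift 1 i) j.
Proof. by rewrite /lowpart mxE. Qed.

Lemma rank_lowpart_le {m' n} (N : 'M[K]_(m'.+2, n)) : (\rank (lowpart N) <= \rank N)%N.
Proof. by rewrite lowpart_mulE mxrankM_maxr. Qed.

Lemma rank_le_lowpart {m' n} (N : 'M[K]_(m'.+2, n)) :
  (\rank N <= (\rank (lowpart N)).+1)%N.
Proof.
have := (mxrank_adds_leqif (usubmx (N : 'M_(1 + m'.+1, n))) (lowpart N)).1.
rewrite addsmxE vsubmxK => /leq_trans; apply.
by apply: (leq_add (rank_leq_row _) (leqnn _)).
Qed.

(* If deleting the first row of N does not lower its rank, the first row is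
   a combination of the others, so the kernel of the lower part is the
   kernel of N. *)
Lemma lowpart_kernel {m' n} (N : 'M[K]_(m'.+2, n)) (x : 'cV[K]_n) :
  (\rank N <= \rank (lowpart N))%N -> lowpart N *m x = 0 -> N *m x = 0.
Proof.
move=> rank_le lowx.
have N_sub : (N <= lowpart N)%MS.
  have low_sub : (lowpart N <= N)%MS by rewrite lowpart_mulE submxMl.
  by rewrite -(mxrank_leqif_sup low_sub).2 eqn_leq rank_lowpart_le rank_le.
have /submxP [w upE] : (usubmx (N : 'M_(1 + m'.+1, n)) <= lowpart N)%MS.
  by apply: submx_trans N_sub; rewrite -[X in usubmx X]mul1mx -mul_usub_mx submxMl.
have -> : N *m x = col_mx (usubmx (N : 'M_(1 + m'.+1, n)) *m x) (lowpart N *m x).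
  by rewrite -mul_col_mx vsubmxK.
by rewrite upE -mulmxA lowx mulmx0 col_mx0.
Qed.

(* Let S1 be a space of matrices of rank at most r over a
   field with more than r elements, whose lower parts all kill x, while some
   member does not kill x.  Then every lower part has rank < r: otherwise a
   suitable combination a M + M1 would have a lower part of rank r, hence
   (by lowpart_kernel) both it and M would kill x, and so would M1. *)
Lemma lowpart_rank_drop {m' n r} {S1 : {vspace 'M[K]_(m'.+2, n)}} {x : 'cV[K]_n} :
  (exists f : 'I_r.+1 -> K, injective f) ->
  (forall M, M \in S1 -> (\rank M <= r)%N) ->
  (forall M, M \in S1 -> lowpart M *m x = 0) ->
  (exists2 M1, M1 \in S1 & M1 *m x != 0) ->
  forall M, M \in S1 -> (\rank (lowpart M) < r)%N.
Proof.
move=> hf rank_le low_kill [M1 M1S M1x] M MS; rewrite ltnNge; apply/negP => r_le.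
have kills N : N \in S1 -> (r <= \rank (lowpart N))%N -> N *m x = 0.
  move=> NS rN; apply: lowpart_kernel (low_kill N NS).
  exact: leq_trans (rank_le N NS) rN.
have rM : \rank (lowpart M) = r.
  by apply/eqP; rewrite eqn_leq r_le (leq_trans (rank_lowpart_le M) (rank_le M MS)).
have [a ra] := pencil_rank (lowpart M) (lowpart M1) hf rM.
have NS : a *: M + M1 \in S1 by rewrite memvD // memvZ.
have := kills _ NS; rewrite !lowpart_mulE mulmxDr -scalemxAr -!lowpart_mulE => /(_ ra).
rewrite mulmxDl -scalemxAl (kills M MS r_le) scaler0 add0r => M1x0.
by rewrite M1x0 eqxx in M1x.
Qed.

Lemma first_axis_normal {m'} (y : 'cV[K]_(m'.+2)) :
  exists2 P : 'M[K]_(m'.+2), P \in unitmx & lowpart (P *m y) = 0.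
Proof.
have Cu := col_ebase_unit y.
exists (invmx (col_ebase y)); first by rewrite unitmx_inv.
rewrite -[y in _ *m y]mulmx_ebase !mulmxA mulVmx // mul1mx lowpart_mul.
apply/matrixP => i j; rewrite !mxE (ord1 j) big1 // => k _.
rewrite !mxE /= ltnNge (leq_trans (rank_leq_col y)) ?andbF ?mul0r //.
Qed.

End FirstRowDeletion.

Section Equivalence.
Context {K : fieldType} {m n : nat}.
Implicit Types (S T U : mxset K m n) (P : 'M[K]_m) (Q : 'M[K]_n).

Lemma mxequiv_refl S : mxequiv S S.
Proof.
exists 1%:M, 1%:M; split; first exact: unitmx1.
split; first exact: unitmx1.
move=> M; split=> [SM | [M' [SM' ->]]]; last by rewrite mul1mx mulmx1.
by exists M; rewrite mul1mx mulmx1.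
Qed.

Lemma mxequiv_trans S T U : mxequiv S T -> mxequiv T U -> mxequiv S U.
Proof.
move=> [P1 [Q1 [P1u [Q1u h1]]]] [P2 [Q2 [P2u [Q2u h2]]]].
exists (P1 *m P2), (Q2 *m Q1); split; first by rewrite unitmx_mul P1u.
split; first by rewrite unitmx_mul Q1u Q2u.
move=> M; split.
  by case/h1 => M' [/h2 [M'' [hM'' ->]] ->]; exists M''; rewrite !mulmxA.
case=> M'' [hM'' ->]; apply/h1; exists (P2 *m M'' *m Q2); split.
  by apply/h2; exists M''.
by rewrite !mulmxA.
Qed.

Lemma colprop_equiv {S T} : mxequiv S T -> column_property T -> column_property S.
Proof.
move=> e hc r s hr hs U eU; apply: (hc r s hr hs U); exact: mxequiv_trans eU e.
Qed.

Lemma reduced_equiv {S T} : mxequiv S T -> reduced T -> reduced S.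
Proof.
move=> [P [Q [Pu [Qu hS]]]] [ker0 span]; split.
  move=> w hw; suff /(congr1 (mulmx (invmx Q))) : Q *m w = 0 by rewrite mulKmx // mulmx0.
  apply: ker0 => M TM.
  have := hw (P *m M *m Q) ((hS _).2 (ex_intro _ M (conj TM erefl))).
  by rewrite -!mulmxA => /(congr1 (mulmx (invmx P))); rewrite mulKmx // mulmx0 mulmxA.
move=> v; have [k [Ms [xs [TMs vE]]]] := span (invmx P *m v).
exists k, (fun i => P *m Ms i *m Q), (fun i => invmx Q *m xs i); split.
  by move=> i; apply/hS; exists (Ms i).
rewrite -[v](mulKVmx Pu) vE mulmx_sumr; apply: eq_bigr => i _.
by rewrite -!mulmxA (mulmxA Q) mulmxV // mul1mx.
Qed.

Lemma urk_equiv {S T r} : mxequiv S T -> urk T r -> urk S r.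
Proof.
move=> [P [Q [Pu [Qu hS]]]] [[M0 [TM0 rM0]] rT]; split.
  by exists (P *m M0 *m Q); split; [apply/hS; exists M0 | rewrite rank_PMQ].
by move=> M /hS [M' [TM' ->]]; rewrite rank_PMQ // rT.
Qed.

Definition conjv P Q (S : {vspace 'M[K]_(m, n)}) : {vspace 'M[K]_(m, n)} :=
  (linfun (mulmxr Q \o mulmx P) @: S)%VS.

Lemma mem_conjv P Q (S : {vspace 'M[K]_(m, n)}) N :
  N \in conjv P Q S <-> exists M, M \in S /\ N = P *m M *m Q.
Proof.
split; first by case/memv_imgP => M MS ->; exists M; rewrite lfunE.
by case=> M [MS ->]; have := memv_img (linfun (mulmxr Q \o mulmx P)) MS; rewrite lfunE.
Qed.

Lemma conjv_equiv {P Q} {S : {vspace 'M[K]_(m, n)}} : P \in unitmx -> Q \in unitmx ->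
  mxequiv (fun N => N \in conjv P Q S) (fun M => M \in S).
Proof. by move=> Pu Qu; exists P, Q; do 2!split => //; move=> N; apply: mem_conjv. Qed.

End Equivalence.

Definition lower_free {K : fieldType} {m' n} (q : nat) (S : mxset K m'.+2 n) : Prop :=
  forall w : 'cV[K]_n, (forall N, S N -> lowpart N *m w = 0) ->
  forall j : 'I_n, (j < q)%N -> w j 0 = 0.

Section LowerSpace.
Context {K : fieldType}.

Lemma reduced_cols_pos {p n} {T : mxset K p.+1 n} : reduced T -> (0 < n)%N.
Proof.
case: n T => // T [_ span]; have [k [Ms [xs [_ sumE]]]] := span (const_mx 1).
have : const_mx 1 = 0 :> 'cV[K]_p.+1.
  by rewrite sumE big1 // => i _; rewrite [xs i]flatmx0 mulmx0.
by move/matrixP/(_ ord0 ord0); rewrite !mxE => /eqP; rewrite oner_eq0.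
Qed.

Lemma block_diag_conj {m1 m2 n1 n2} (P' : 'M[K]_m2) (Q' : 'M[K]_n1)
    (N : 'M[K]_(m1 + m2, n1 + n2)) : drsubmx N = 0 ->
  block_mx (1%:M : 'M_m1) 0 0 P' *m N *m block_mx Q' 0 0 (1%:M : 'M_n2) =
  block_mx (ulsubmx N *m Q') (ursubmx N) (P' *m dlsubmx N *m Q') 0.
Proof.
move=> dr0; rewrite -[N in LHS]submxK dr0 !mulmx_block.
by rewrite !mul1mx !mul0mx !mulmx0 !addr0 !add0r !mulmx1.
Qed.

Context {m' q n'' : nat}.
Local Notation mxs := ('M[K]_(m'.+2, q + n'')).
Local Notation blk N := (N : 'M_(1 + m'.+1, q + n'')).

Lemma lowblock_dl (N : mxs) : lowblock 1 q N = dlsubmx (blk N).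
Proof.
apply/matrixP => i j; rewrite !mxE.
rewrite -[(1 + i)%N]/(val (rshift 1 i : 'I_(1 + m'.+1))) -[nat_of_ord j]/(val (lshift n'' j)).
by rewrite mxe_ord.
Qed.

Lemma drsubmx0_entries (X : mxs) : drsubmx (blk X) = 0 ->
  forall (i : 'I_m'.+2) (j : 'I_(q + n'')), (1 <= i)%N -> (q <= j)%N -> X i j = 0.
Proof.
move=> dr0 i j hi hj.
case: (splitP (i : 'I_(1 + m'.+1))) => [i0 i0E | i' iE]; first by move: hi; rewrite i0E (ord1 i0).
case: (splitP j) => [j0 j0E | j' jE]; first by move: hj; rewrite j0E leqNgt ltn_ord.
have -> : i = rshift 1 i' by apply: val_inj.
have -> : j = rshift q j' by apply: val_inj.
by move/matrixP: dr0 => /(_ i' j'); rewrite !mxE.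
Qed.

Lemma decomposed_shift r s (X : mxs) : (s <= q)%N ->
  drsubmx (blk X) = 0 ->
  (forall (i : 'I_m'.+1) (j : 'I_q), (r <= i)%N -> (s <= j)%N -> lowblock 1 q X i j = 0) ->
  forall (i : 'I_m'.+2) (j : 'I_(q + n'')), (1 + r <= i)%N -> (s <= j)%N -> X i j = 0.
Proof.
move=> sq dr0 low0 i j hi hj.
case: (ltnP j q) => jq; last by apply: drsubmx0_entries => //; lia.
have i1 : (i.-1 < m'.+1)%N by have := ltn_ord i; lia.
have := low0 (Ordinal i1) (Ordinal jq); rewrite mxE /=.
have -> : (1 + i.-1)%N = i by lia.
by rewrite mxe_ord; apply => //; lia.
Qed.

Variable S' : mxset K m'.+2 (q + n'').
Hypothesis S'dec : decomposed 1 q S'.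
Local Notation H := (lowspace 1 q S').

Lemma decomposed_drsubmx {N} : S' N -> drsubmx (blk N) = 0.
Proof. by move=> NS; apply/matrixP => i j; rewrite !mxE; apply: S'dec => //=; exact: leq_addr. Qed.

Lemma lowpart_decomposed N : S' N -> lowpart N = row_mx (lowblock 1 q N) 0.
Proof. by move=> NS; rewrite lowblock_dl -(decomposed_drsubmx NS) /lowpart hsubmxK. Qed.

Lemma rank_lowblock N : S' N -> \rank (lowblock 1 q N) = \rank (lowpart N).
Proof. by move=> NS; rewrite lowpart_decomposed // rank_row_mx0. Qed.

(* Deleting the first row lowers the rank by at most one; if it always
   lowers the rank below r, the lower space has upper rank exactly r - 1. *)
Lemma lowspace_urk {r} : urk S' r ->
  (forall N, S' N -> (\rank (lowpart N) < r)%N) -> urk H r.-1.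
Proof.
move=> [[M0 [M0S rM0]] _] drop; split.
  exists (lowblock 1 q M0); split; first by exists M0.
  rewrite rank_lowblock //; have := rank_le_lowpart M0; have := drop _ M0S; lia.
by move=> _ [N [NS ->]]; rewrite rank_lowblock //; have := drop _ NS; lia.
Qed.

(* Reducedness passes to the lower space: its common kernel is controlled
   by [lower_free], and its column spaces are the lower parts of those of S'. *)
Lemma lowspace_reduced : reduced S' -> lower_free q S' -> reduced H.
Proof.
move=> [_ span] free; split.
  move=> z hz; apply/matrixP => j l; rewrite (ord1 l) mxE.
  have := free (col_mx z 0) _ (lshift n'' j) (ltn_ord j); rewrite col_mxEu; apply.
  move=> N NS; rewrite lowpart_decomposed // mul_row_col mulmx0 addr0.
  by apply: hz; exists N.
move=> v; have [k [Ms [xs [S'Ms vE]]]] := span (col_mx (0 : 'cV[K]_1) v).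
exists k, (fun i => lowblock 1 q (Ms i)), (fun i => usubmx (xs i : 'cV_(q + n''))).
split; first by move=> i; exists (Ms i).
have := congr1 lowpart vE; rewrite {1}/lowpart col_mxKd => ->.
rewrite lowpart_mulE mulmx_sumr; apply: eq_bigr => i _.
rewrite mulmxA -lowpart_mulE lowpart_decomposed //.
by rewrite -[xs i in LHS]vsubmxK mul_row_col mul0mx addr0.
Qed.

Lemma lowspace_defective : column_property S' -> (0 < q)%N -> defective H.
Proof.
move=> hcol q0; apply: (hcol 1 q isT _ S' (mxequiv_refl S') S'dec).
by rewrite q0 leq_addr.
Qed.

(* The column property passes to the lower space: an equivalence P'.H.Q'
   lifts to the equivalence [1, P'].S'.[Q', 1], which carries
   (r,s)-decompositions of the lower space to (1 + r, s)-decompositions of S'. *)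
Lemma lowspace_colprop : column_property S' -> column_property H.
Proof.
move=> hcol r s hr hs T [P' [Q' [P'u [Q'u hT]]]] Tdec _ [T0 [TT0 ->]].
have [_ [[N [NS ->]] T0E]] := (hT T0).1 TT0.
have sq : (s <= q)%N by case/andP: hs.
pose P1 : 'M[K]_(m'.+2) := block_mx (1%:M : 'M_1) 0 0 P'.
pose Q1 : 'M[K]_(q + n'') := block_mx Q' 0 0 (1%:M : 'M_n'').
have P1u : P1 \in unitmx.
  have det_P1 : \det P1 = \det P'.
    by have := det_ublock (1%:M : 'M[K]_1) 0 P'; rewrite det1 mul1r.
  by rewrite unitmxE det_P1 -unitmxE.
have Q1u : Q1 \in unitmx by rewrite unitmxE /Q1 det_ublock det1 mulr1 -unitmxE.
have conjE N' : S' N' -> P1 *m N' *m Q1 =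
    block_mx (ulsubmx (blk N') *m Q') (ursubmx (blk N')) (P' *m lowblock 1 q N' *m Q') 0.
  by move=> N'S; rewrite lowblock_dl; exact: block_diag_conj (decomposed_drsubmx N'S).
have conj_low N' : S' N' -> lowblock 1 q (P1 *m N' *m Q1) = P' *m lowblock 1 q N' *m Q'.
  by move=> N'S; rewrite lowblock_dl (conjE _ N'S) block_mxKdl.
pose S'' := fun M : mxs => exists N', S' N' /\ M = P1 *m N' *m Q1.
have S''equiv : mxequiv S'' S' by exists P1, Q1.
have S''dec : decomposed (1 + r) s S''.
  move=> _ [N' [N'S ->]]; apply: decomposed_shift sq _ _.
    by rewrite (conjE _ N'S) block_mxKdr.
  move=> i j ri sj; rewrite conj_low //; apply: (Tdec _ _ i j ri sj); apply/hT.
  by exists (lowblock 1 q N'); split => //; exists N'.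
have hs' : (1 <= s <= q + n'')%N.
  by case/andP: hs => s1 _; rewrite s1 (leq_trans sq (leq_addr _ _)).
have lowN : lowspace (1 + r) s S'' (lowblock (1 + r) s (P1 *m N *m Q1)).
  by exists (P1 *m N *m Q1); split => //; exists N.
rewrite T0E -conj_low // rank_lowblock_lowblock //.
exact: (hcol (1 + r)%N s ltac:(lia) hs' S'' S''equiv S''dec _ lowN).
Qed.

End LowerSpace.

Lemma lowspace_props {K : fieldType} {m' n q r} {S' : mxset K m'.+2 n} : (q <= n)%N ->
  column_property S' -> reduced S' -> decomposed 1 q S' -> lower_free q S' ->
  urk S' r -> (forall N, S' N -> (\rank (lowpart N) < r)%N) ->
  [/\ (r <= q)%N, reduced (lowspace 1 q S'), column_property (lowspace 1 q S')
    & urk (lowspace 1 q S') r.-1].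
Proof.
move=> qn; move: S'; rewrite -(subnKC qn) => S' hcol hred hdec hfree hurk drop.
have redH := lowspace_reduced S' hdec hred hfree.
have urkH := lowspace_urk S' hdec hurk drop.
have [[H0 [HH0 rH0]] _] := urkH.
have := lowspace_defective S' hdec hcol (reduced_cols_pos redH) H0 HH0.
rewrite rH0 => rq; split => //; first lia.
exact: lowspace_colprop.
Qed.

Section Normalization.
Context {K : fieldType}.

Lemma pid_mul_entry {n} q (w : 'cV[K]_n) (j : 'I_n) :
  (pid_mx q *m w) j 0 = if (j < q)%N then w j 0 else 0.
Proof.
rewrite mxE (bigD1 j) //= big1 ?addr0 => [|k kj]; last first.
  by rewrite mxE; case: eqP => [/val_inj jk | _]; [rewrite jk eqxx in kj | rewrite mul0r].
by rewrite mxE eqxx /=; case: (j < q)%N; rewrite ?mul1r ?mul0r.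
Qed.

Lemma mul_pid_entry {a n} q (X : 'M[K]_(a, n)) i (j : 'I_n) :
  (q <= j)%N -> (X *m pid_mx q) i j = 0.
Proof.
move=> qj; rewrite mxE big1 // => k _; rewrite mxE.
case: eqP => [kj | _]; last by rewrite mulr0.
by rewrite kj ltnNge qj /= mulr0.
Qed.

Context {m' n : nat}.
Implicit Types (S : {vspace 'M[K]_(m'.+2, n)}) (P : 'M[K]_(m'.+2)).

Lemma decomposed_of_lowpart q (T : mxset K m'.+2 n) :
  (forall N, T N -> forall i (j : 'I_n), (q <= j)%N -> lowpart N i j = 0) ->
  decomposed 1 q T.
Proof.
move=> low0 N TN i j i1 qj.
have i1' : (i.-1 < m'.+1)%N by have := ltn_ord i; lia.
have -> : i = rshift 1 (Ordinal i1') by apply: val_inj => /=; lia.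
by rewrite -lowpart_entry low0.
Qed.

Lemma line_image_normal {S} {x : 'cV[K]_n} : \dim (linfun (mulmxr x) @: S)%VS = 1%N ->
  exists2 P, P \in unitmx &
    (forall M, M \in S -> lowpart (P *m M) *m x = 0) /\ exists2 M1, M1 \in S & M1 *m x != 0.
Proof.
set V := (linfun (mulmxr x) @: S)%VS => dimV.
have y0 : vpick V != 0 by rewrite vpick0 -dimv_eq0 dimV.
have VE : V = <[vpick V]>%VS.
  by apply/eqP; rewrite eq_sym eqEdim dim_vline y0 dimV -memvE memv_pick.
have [P Pu Py] := first_axis_normal (vpick V).
exists P => //; split.
  move=> M MS; have := memv_img (linfun (mulmxr x)) MS.
  rewrite lfunE /= -/V VE => /vlineP [k Mx].
  by rewrite -lowpart_mul -mulmxA Mx -scalemxAr !lowpart_mulE -scalemxAr -lowpart_mulE Py scaler0.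
have /memv_imgP [M1 M1S yE] := memv_pick V.
by exists M1 => //; rewrite lfunE /= in yE; rewrite -yE.
Qed.

Definition lowpart_span P S : 'M[K]_n :=
  (\sum_(i < \dim S) <<lowpart (P *m (vbasis S)`_i)>>)%MS.

Lemma lowpart_span_sub P S M : M \in S -> (lowpart (P *m M) <= lowpart_span P S)%MS.
Proof.
move=> MS; rewrite (coord_vbasis MS) mulmx_sumr lowpart_mulE mulmx_sumr.
apply: summx_sub => i _; rewrite -!scalemxAr -lowpart_mulE scalemx_sub //.
by apply: (sumsmx_sup i) => //; rewrite genmxE.
Qed.

Lemma lowpart_span_ker P S (w : 'cV[K]_n) :
  (forall M, M \in S -> lowpart (P *m M) *m w = 0) -> lowpart_span P S *m w = 0.
Proof.
move=> kill; apply/sub_kermxP; apply/sumsmx_subP => i _; rewrite genmxE.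
apply/sub_kermxP; apply/kill/vbasis_mem/mem_nth.
by rewrite size_tuple.
Qed.

(* Column compression: after the row change P, a column change Q brings S to
   (1,q)-decomposed form, q being the rank of the span of the lower parts,
   and the first q columns of the lower parts are then jointly free. *)
Lemma column_compression P S : exists q (Q : 'M[K]_n),
  [/\ Q \in unitmx, decomposed 1 q (fun N => N \in conjv P Q S)
    & lower_free q (fun N => N \in conjv P Q S)].
Proof.
have BE := mulmx_ebase (lowpart_span P S).
have Cu := col_ebase_unit (lowpart_span P S).
have Ru := row_ebase_unit (lowpart_span P S).
move: (col_ebase _) (row_ebase _) (\rank _) Cu Ru BE => C R q Cu Ru BE.
exists q, (invmx R); split; first by rewrite unitmx_inv.
  apply: decomposed_of_lowpart => _ /mem_conjv [M [MS ->]] i j qj.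
  have /submxP [Z ZE] := lowpart_span_sub P S M MS.
  by rewrite lowpart_mul ZE -BE !mulmxA mulmxK // mul_pid_entry.
move=> w kill j jq.
have Bw : lowpart_span P S *m (invmx R *m w) = 0.
  apply: lowpart_span_ker => M MS; rewrite mulmxA -lowpart_mul; apply: kill.
  by apply/mem_conjv; exists M.
have : (pid_mx q : 'M[K]_n) *m w = 0.
  move: Bw; rewrite -BE -!mulmxA mulKVmx // => /(congr1 (mulmx (invmx C))).
  by rewrite mulKmx // mulmx0.
by move/matrixP/(_ j 0); rewrite pid_mul_entry jq mxE.
Qed.

Lemma lower_free_lt {q} {T : mxset K m'.+2 n} {w : 'cV[K]_n} :
  lower_free q T -> w != 0 -> (forall N, T N -> lowpart N *m w = 0) -> (q < n)%N.
Proof.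
move=> free w0 kill; rewrite ltnNge; apply: contra w0 => nq.
apply/eqP/matrixP => j k; rewrite (ord1 k) mxE.
exact: (free _ kill j (leq_trans (ltn_ord j) nq)).
Qed.

End Normalization.

Section Primitivity.
Context {K : fieldType} {m n : nat}.

Lemma defidx_urk {S : mxset K m n} {r} : urk S r -> defidx S (n - r).
Proof.
move=> [[M0 [M0S rM0]] rS]; split.
  by move=> M MS; rewrite dker_full leq_sub2l // rS.
by move=> c hc; have := hc M0 M0S; rewrite dker_full rM0.
Qed.

(* If a surjection pi : K^m -> K^(m-1) lowers the rank of every matrix of S
   below its upper rank r, then pi.S is (n - r + 1)-defective, so S is not
   primitive. *)
Lemma not_primitive_of_projection {S : mxset K m n} {r} (pi : 'M[K]_(m.-1, m)) :
  urk S r -> \rank pi = m.-1 -> (forall M, S M -> (\rank (pi *m M) < r)%N) ->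
  ~ primitive S.
Proof.
move=> hurk rpi drop [_ prim]; have [_ no_proj] := prim _ (defidx_urk hurk).
apply: no_proj; exists pi; split.
  by apply/eqP; rewrite eqEdim subvf /= dimvf dim_matrix mulr1 dim_limg_mulmx rpi.
move=> M MS; rewrite dker_full.
have [[M0 [_ rM0]] _] := hurk; have := rank_leq_col M0; have := drop M MS; lia.
Qed.

End Primitivity.

Theorem mainTheorem14 (K : fieldType) (m n : nat)
    (S : {vspace 'M[K]_(m, n)}) (r : nat) :
  reduced (fun M => M \in S) ->
  column_property (fun M => M \in S) ->
  (2 <= m)%N ->
  urk (fun M => M \in S) r ->
  (exists f : 'I_r.+1 -> K, injective f) ->
  (exists x : 'cV[K]_n, \dim (linfun (mulmxr x) @: S)%VS = 1%N) ->
  (exists q : nat, (r <= q)%N /\ (q < n)%N /\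
     exists S' : {vspace 'M[K]_(m, n)},
       mxequiv (fun M => M \in S') (fun M => M \in S) /\
       decomposed 1 q (fun M => M \in S') /\
       reduced (lowspace 1 q (fun M => M \in S')) /\
       column_property (lowspace 1 q (fun M => M \in S')) /\
       urk (lowspace 1 q (fun M => M \in S')) r.-1)
  /\ ~ primitive (fun M => M \in S).
Proof.
move=> hred hcol m2 hurk hf [x dimSx].
case: m S hred hcol m2 hurk dimSx => [|[|m']] S hred hcol m2 hurk dimSx //.
have [P Pu [Px [M1 M1S M1x]]] := line_image_normal dimSx.
have [q [Q [Qu S'dec S'free]]] := column_compression P S.
set S' := conjv P Q S in S'dec S'free *.
have S'equiv : mxequiv (fun N => N \in S') (fun M => M \in S) := conjv_equiv Pu Qu.
have S'urk := urk_equiv S'equiv hurk.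
pose x' := invmx Q *m x.
have S'x' N : N \in S' -> lowpart N *m x' = 0.
  by case/mem_conjv => M [MS ->]; rewrite lowpart_mul -mulmxA mulKVmx // Px.
have M1'x' : P *m M1 *m Q *m x' != 0.
  rewrite -!mulmxA mulKVmx //; apply: contraNneq M1x.
  by move/(congr1 (mulmx (invmx P))); rewrite mulKmx // mulmx0 => ->.
have qn : (q < n)%N.
  by apply: lower_free_lt S'free _ S'x'; apply: contraNneq M1'x' => ->; rewrite mulmx0.
have drop N : N \in S' -> (\rank (lowpart N) < r)%N.
  apply: lowpart_rank_drop hf (fun M MS => S'urk.2 M MS) S'x' _ N.
  by exists (P *m M1 *m Q) => //; apply/mem_conjv; exists M1.
have [rq redH colH urkH] := lowspace_props (ltnW qn) (colprop_equiv S'equiv hcol)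
  (reduced_equiv S'equiv hred) S'dec S'free S'urk drop.
split; first by exists q; do 2!split => //; exists S'.
apply: (not_primitive_of_projection (m := m'.+2) (lowpart P) hurk).
  apply/eqP; rewrite eqn_leq rank_leq_row -ltnS -[X in (X <= _)%N](mxrank_unit Pu).
  exact: rank_le_lowpart.
move=> M MS; rewrite -lowpart_mul -(mxrankMfree _ (_ : row_free Q)) ?row_free_unit // -lowpart_mul.
by apply: drop; apply/mem_conjv; exists M.
Qed.
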